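(* Let $\mathcal G$ be an XOR game with cost matrix $G$, optimal quantum bias $\beta=\beta_q^*(\mathcal G)$, and optimal row and column biases $(r_x)_{x\in I_A}$, $(c_y)_{y\in I_B}$. For $x\in I_A$ put $\hat b_x=\frac1{r_x}\sum_{y\in I_B}G_{xy}b_y\in\mathcal A$. Then there exist real numbers $\lambda_y\ge0$ and $v_{yw}\in\mathbb R$ ($y,w\in I_B$) such that, in $\mathcal A$, \[ \beta\cdot1-h_{\mathcal G}=\sum_{x\in I_A}\frac{r_x}{2}\big(a_x-\hat b_x\big)^2+\sum_{y\in I_B}\frac{\lambda_y}{2}\Big(\sum_{w\in I_B}v_{yw}b_w\Big)^2 . \] In particular $\beta\cdot1-h_{\mathcal G}$ has a nice sum-of-squares decomposition. (One may take $\lambda_y$ and $(v_{yw})_w$ to be the eigenvalues and orthonormal eigenvectors of the positive semidefinite matrix $\Delta(\mathbf c)-G^{T}\Delta(\mathbf r)^{-1}G$.)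
   Context: An XOR game $\mathcal G$ is given by finite question sets $I_A,I_B$, a probability distribution $\pi$ on $I_A\times I_B$ and a function $g:I_A\times I_B\to\{0,1\}$; the players answer bits $a,b$ and win iff $a\oplus b=g(x,y)$. Its cost matrix is the $I_A\times I_B$ matrix $G_{xy}=(-1)^{g(x,y)}\pi(x,y)$. A quantum strategy $S$ consists of finite-dimensional Hilbert spaces $\mathcal H_A,\mathcal H_B$, a unit vector $|\psi\rangle\in\mathcal H_A\otimes\mathcal H_B$ and binary observables (self-adjoint unitaries) $A_x$ on $\mathcal H_A$, $B_y$ on $\mathcal H_B$; its bias is $\beta_q(S,\mathcal G)=\sum_{x,y}G_{xy}\langle\psi|A_x\otimes B_y|\psi\rangle$, and $\beta_q^*(\mathcal G)=\sup_S\beta_q(S,\mathcal G)$ is the optimal quantum bias. Known facts (Tsirelson, Slofstra) used as standing facts: there are optimal strategies; there are numbers $r_x>0$ ($x\in I_A$), the optimal row biases, and $c_y$ ($y\in I_B$), the optimal column biases, such that $r_x=\sum_yG_{xy}\langle\psi|A_x\otimes B_y|\psi\rangle$ and $c_y=\sum_xG_{xy}\langle\psi|A_x\otimes B_y|\psi\rangle$ for every optimal quantum strategy; hence $\sum_xr_x=\sum_yc_y=\beta_q^*(\mathcal G)$; and $(\mathbf r,\mathbf c)$ satisfies $\begin{pmatrix}\Delta(\mathbf r)&-G\\-G^{T}&\Delta(\mathbf c)\end{pmatrix}\succeq0$, where $\Delta(\mathbf r)$, $\Delta(\mathbf c)$ are the diagonal matrices with diagonal entries $r_x$, $c_y$ (indeed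 $(\mathbf r,\mathbf c)$ is optimal for the SDP minimizing $\tfrac12\sum_xr_x+\tfrac12\sum_yc_y$ under this constraint, with optimal value $\beta_q^*(\mathcal G)$). Scenario algebra: $\mathcal A$ is the complex group $*$-algebra of $\mathbb Z_2^{*I_A}\times\mathbb Z_2^{*I_B}$, i.e. generated by self-adjoint unitaries $a_x$ ($x\in I_A$) and $b_y$ ($y\in I_B$) subject only to $a_x^2=b_y^2=1$ and $a_xb_y=b_ya_x$. The bias polynomial is $h_{\mathcal G}=\sum_{x,y}G_{xy}a_xb_y$. A sum-of-squares decomposition is nice if it is a non-negative real linear combination of terms $\big(\sum_y\gamma_yb_y\big)^2$ and $\big(a_x-\sum_y\gamma_{x,y}b_y\big)^2$ with real coefficients. *)

From HB Require Import structures.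
From mathcomp Require Import all_boot all_order all_algebra.
From mathcomp Require Import reals.
From mathcomp Require Import complex mxtens.

Set Implicit Arguments.
Unset Strict Implicit.
Unset Printing Implicit Defensive.

Import Order.TTheory GRing.Theory Num.Theory.
Local Open Scope ring_scope.

Section XOR.
Variables (R : realType) (IA IB : finType).

(* An XOR game: a probability distribution [pi] on IA x IB and a
   predicate [g]; the players win iff a (+) b = g x y. *)
Record xor_game := XorGame {
  xg_pi : IA -> IB -> R;
  xg_g  : IA -> IB -> bool }.

Definition valid_game (Gm : xor_game) : Prop :=
  (forall x y, 0 <= xg_pi Gm x y) /\
  \sum_(x : IA) \sum_(y : IB) xg_pi Gm x y = 1.

Definition cost (Gm : xor_game) (x : IA) (y : IB) : R :=
  (-1) ^+ xg_g Gm x y * xg_pi Gm x y.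

(* Quantum strategies on C^dA (x) C^dB = C^(dA*dB)  (Kronecker product) *)

Local Notation C := R[i].

Definition adj {m n} (M : 'M[C]_(m, n)) : 'M[C]_(n, m) := (map_mx conjc M)^T.

Record qstrategy := QStrategy {
  dA : nat;
  dB : nat;
  qpsi : 'cV[C]_(dA * dB);
  qA : IA -> 'M[C]_dA;
  qB : IB -> 'M[C]_dB }.

Definition binary_observable {n} (M : 'M[C]_n) : Prop :=
  adj M = M /\ adj M *m M = 1%:M.

Definition is_qstrategy (S : qstrategy) : Prop :=
  (adj (qpsi S) *m qpsi S = 1%:M) /\
  (forall x, binary_observable (qA S x)) /\
  (forall y, binary_observable (qB S y)).

(* <psi| A_x (x) B_y |psi>  (a real number for a strategy; we take Re) *)
Definition corr (S : qstrategy) (x : IA) (y : IB) : C :=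
  (adj (qpsi S) *m (qA S x *t qB S y) *m qpsi S) 0 0.

Definition qbias (Gm : xor_game) (S : qstrategy) : R :=
  complex.Re (\sum_(x : IA) \sum_(y : IB) (cost Gm x y)%:C%C * corr S x y).

Definition row_bias (Gm : xor_game) (S : qstrategy) (x : IA) : R :=
  complex.Re (\sum_(y : IB) (cost Gm x y)%:C%C * corr S x y).

Definition col_bias (Gm : xor_game) (S : qstrategy) (y : IB) : R :=
  complex.Re (\sum_(x : IA) (cost Gm x y)%:C%C * corr S x y).

Definition optimal_strategy (Gm : xor_game) (S : qstrategy) : Prop :=
  is_qstrategy S /\
  forall S' : qstrategy, is_qstrategy S' -> qbias Gm S' <= qbias Gm S.

Definition psd {I : finType} (M : I -> I -> R) : Prop :=
  (forall i j, M i j = M j i) /\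
  forall z : I -> R, 0 <= \sum_(i : I) \sum_(j : I) z i * M i j * z j.

Definition block_mx_rc (Gm : xor_game) (r : IA -> R) (c : IB -> R)
    (i j : IA + IB) : R :=
  match i, j with
  | inl x, inl x' => if x == x' then r x else 0
  | inl x, inr y => - cost Gm x y
  | inr y, inl x => - cost Gm x y
  | inr y, inr y' => if y == y' then c y else 0
  end.

(* The scenario algebra: complex group algebra of                     *)
(*   Z_2^{*IA} x Z_2^{*IB}.                                           *)
(* A group element is a pair of reduced words (no two equal adjacent   *)
(* letters); [nf] computes the reduced form of a word (cancel xx = 1). *)
(* An element of the algebra is a formal finite sum  sum_k c_k w_k     *)
(* (w_k arbitrary word pairs); two such sums are equal in the algebra  *)
(* iff they have the same coefficient at every group element.          *)

End XOR.

Section FreeZ2.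
Variable T : eqType.
Definition nf_step (st : seq T) (x : T) : seq T :=
  if st is y :: st' then (if y == x then st' else x :: st) else [:: x].
Definition nf (s : seq T) : seq T := rev (foldl nf_step [::] s).
End FreeZ2.

Section Scenario.
Variables (R : realType) (IA IB : finType).
Local Notation C := R[i].

Definition word := (seq IA * seq IB)%type.
Definition scen := seq (C * word).

Definition scen_coef (p : scen) (g : word) : C :=
  \sum_(t <- p | (nf t.2.1, nf t.2.2) == g) t.1.

Definition scen_eq (p q : scen) : Prop := forall g : word, scen_coef p g = scen_coef q g.

Definition scen_add (p q : scen) : scen := p ++ q.
Definition scen_scale (k : C) (p : scen) : scen := [seq (k * t.1, t.2) | t <- p].
Definition scen_sub (p q : scen) : scen := scen_add p (scen_scale (-1) q).
Definition scen_mul (p q : scen) : scen :=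
  [seq (s.1 * t.1, (s.2.1 ++ t.2.1, s.2.2 ++ t.2.2)) | s <- p, t <- q].
Definition scen_sq (p : scen) : scen := scen_mul p p.
Definition scen1 : scen := [:: (1, ([::], [::]))].
Definition gen_a (x : IA) : scen := [:: (1, ([:: x], [::]))].
Definition gen_b (y : IB) : scen := [:: (1, ([::], [:: y]))].
Definition scen_sum {I : Type} (s : seq I) (F : I -> scen) : scen :=
  \big[scen_add/[::]]_(i <- s) F i.

Definition bias_poly (Gm : xor_game R IA IB) : scen :=
  scen_sum (enum IA) (fun x => scen_sum (enum IB) (fun y =>
    scen_scale (cost Gm x y)%:C%C (scen_mul (gen_a x) (gen_b y)))).

Definition hat_b (Gm : xor_game R IA IB) (r : IA -> R) (x : IA) : scen :=
  scen_scale ((r x)^-1)%:C%C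
    (scen_sum (enum IB) (fun y => scen_scale (cost Gm x y)%:C%C (gen_b y))).

End Scenario.

(* The block matrix [Delta(r) -G; -G^T Delta(c)] is psd and Delta(r) > 0, so the
   Schur complement N = Delta(c) - G^T Delta(r)^-1 G is psd, and Gaussian
   elimination writes it as sum_y lam_y v_y v_y^T with lam_y >= 0.  Expanding
   the squares, sum_x r_x/2 (a_x - hat b_x)^2 = sum_x r_x/2 - sum_x r_x a_x hat b_x
   + 1/2 sum_ww' (G^T Delta(r)^-1 G)_ww' b_w b_w', and the lam-terms add
   1/2 sum_ww' N_ww' b_w b_w'.  As b_w^2 = 1, the quadratic b-terms add up to
   1/2 sum_w c_w = beta/2, the constant terms to 1/2 sum_x r_x = beta/2, and the
   cross terms to -h_G. *)
From HB Require Import structures.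
From mathcomp Require Import all_boot all_order all_algebra.
From mathcomp Require Import reals.
From mathcomp Require Import complex mxtens.
From mathcomp Require Import ring lra.

Set Implicit Arguments.
Unset Strict Implicit.
Unset Printing Implicit Defensive.

Import Order.TTheory GRing.Theory Num.Theory.
Local Open Scope ring_scope.

Section PsdDecomposition.
Variables (R : realType) (I : finType).
Implicit Types (M : I -> I -> R) (z : I -> R).

Definition qform M z := \sum_i \sum_j z i * M i j * z j.

Lemma sum_mul_delta (F : I -> R) k : \sum_j F j * (j == k)%:R = F k.
Proof.
by rewrite (bigD1 k) //= eqxx mulr1 big1 ?addr0 // => j /negPf ->; rewrite mulr0.
Qed.

Lemma qform0 M : qform M (fun _ => 0) = 0.
Proof. by rewrite /qform big1 // => i _; rewrite big1 // => j _; rewrite !mul0r. Qed.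

Lemma qform_shift M z t k : (forall i j, M i j = M j i) ->
  qform M (fun i => z i + t * (i == k)%:R) =
  qform M z + 2 * t * (\sum_j M k j * z j) + t ^+ 2 * M k k.
Proof.
move=> Msym; rewrite /qform.
transitivity (\sum_i (\sum_j z i * M i j * z j + t * (z i * M i k)
   + t * (\sum_j M i j * z j) * (i == k)%:R + t ^+ 2 * M i k * (i == k)%:R)).
  apply: eq_bigr => i _.
  rewrite (eq_bigr (fun j => z i * M i j * z j
     + t * (z i * M i j) * (j == k)%:R + t * (i == k)%:R * (M i j * z j)
     + t ^+ 2 * (i == k)%:R * M i j * (j == k)%:R)); last by move=> j _; ring.
  rewrite !big_split /= !sum_mul_delta -mulr_sumr.
  by rewrite [t * _ * (i == k)%:R]mulrAC [t ^+ 2 * M i k * _]mulrAC.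
rewrite !big_split /= !sum_mul_delta -mulr_sumr.
under [\sum_i z i * M i k]eq_bigr => j _ do rewrite Msym mulrC.
ring.
Qed.

Lemma eq_qform M z z' : z =1 z' -> qform M z = qform M z'.
Proof. by move=> eq_z; apply: eq_bigr => i _; apply: eq_bigr => j _; rewrite !eq_z. Qed.

Lemma qform_delta M k : (forall i j, M i j = M j i) ->
  qform M (fun i => (i == k)%:R) = M k k.
Proof.
move=> Msym; rewrite (@eq_qform M _ (fun i => 0 + 1 * (i == k)%:R)) => [|i]; last first.
  by rewrite add0r mul1r.
rewrite qform_shift // qform0 big1 ?mulr0 ?add0r ?expr1n ?mul1r //.
by move=> j _; rewrite mulr0.
Qed.

Lemma psd_diag_ge0 M k : psd M -> 0 <= M k k.
Proof. by case=> Msym Mpos; rewrite -(qform_delta k Msym); apply: Mpos. Qed.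

(* Along [e_j + t e_k] the form is affine in [t] and bounded below, so its slope
   [2 M k j] vanishes. *)
Lemma psd_diag_eq0 M k j : psd M -> M k k = 0 -> M k j = 0.
Proof.
move=> [Msym Mpos] Mkk0.
have lin_ge0 t : 0 <= M j j + 2 * t * M k j.
  have := Mpos (fun i => (i == j)%:R + t * (i == k)%:R).
  by rewrite -/(qform _ _) qform_shift // qform_delta // Mkk0 mulr0 addr0 sum_mul_delta.
apply/eqP; apply: contraT => Mkj_neq0.
have := lin_ge0 (- (M j j + 1) / (2 * M k j)).
have -> : 2 * (- (M j j + 1) / (2 * M k j)) * M k j = - (M j j + 1) by field.
lra.
Qed.

Section SchurStep.
Variables (M : I -> I -> R) (k : I).
Hypothesis Mpsd : psd M.
Hypothesis Mkk_neq0 : M k k != 0.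

Definition schur_step i j := M i j - M i k * M k j / M k k.

Lemma schur_step_psd : psd schur_step.
Proof.
have [Msym Mpos] := Mpsd.
split=> [i j|z]; first by rewrite /schur_step Msym [M i k]Msym [M k j]Msym; ring.
rewrite -/(qform _ _); set s := \sum_j M k j * z j.
have -> : qform schur_step z = qform M z - s ^+ 2 / M k k.
  transitivity (qform M z - (\sum_i \sum_j z i * M i k * (M k j * z j)) / M k k).
    rewrite /qform mulr_suml -sumrB; apply: eq_bigr => i _.
    by rewrite mulr_suml -sumrB; apply: eq_bigr => j _; rewrite /schur_step; ring.
  rewrite -big_distrlr /= expr2; congr (_ - (_ * _) / _).
  by apply: eq_bigr => i _; rewrite Msym mulrC.
have := Mpos (fun i => z i + (- s / M k k) * (i == k)%:R).
rewrite -/(qform _ _) qform_shift // -/s -addrA.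
suff -> : 2 * (- s / M k k) * s + (- s / M k k) ^+ 2 * M k k = - (s ^+ 2 / M k k) by [].
by field.
Qed.

Lemma schur_step_diag i : M i i = 0 \/ i = k -> schur_step i i = 0.
Proof.
case=> [Mii0|->]; last by rewrite /schur_step mulrAC divff // mul1r subrr.
by rewrite /schur_step Mii0 (psd_diag_eq0 k Mpsd Mii0) !mul0r subr0.
Qed.

End SchurStep.

Definition diag_supp M := [set i | M i i != 0].

Lemma psd_zero_diag_sum_rank1 M : psd M -> (forall i, M i i = 0) ->
  exists (lam : I -> R) (v : I -> I -> R),
    [/\ forall y, 0 <= lam y, forall y, M y y = 0 -> lam y = 0
      & forall i j, M i j = \sum_y lam y * v y i * v y j].
Proof.
move=> Mpsd diag0; exists (fun=> 0), (fun _ _ => 0); split=> // i j.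
by rewrite (psd_diag_eq0 j Mpsd (diag0 i)) big1 // => y _; rewrite !mul0r.
Qed.

Lemma schur_step_support M k : psd M -> M k k != 0 ->
  (#|diag_supp (schur_step M k)| < #|diag_supp M|)%N.
Proof.
move=> Mpsd Mkk; rewrite (cardsD1 k (diag_supp M)) inE Mkk add1n ltnS.
apply: subset_leq_card.
apply/subsetP => i; rewrite !inE; apply: contraNT; rewrite negb_and negbK.
by case/orP=> [/eqP ik|/negPn/eqP Mii0]; rewrite schur_step_diag //; [right|left].
Qed.

(* Gaussian elimination: every Schur step contributes the rank-one term
   [M k (M k)^T / M k k], indexed by its pivot [k]; pivots are nonzero
   diagonal entries, hence the support condition keeping the indices apart. *)
Lemma psd_sum_rank1_supp n M : (#|diag_supp M| <= n)%N -> psd M ->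
  exists (lam : I -> R) (v : I -> I -> R),
    [/\ forall y, 0 <= lam y, forall y, M y y = 0 -> lam y = 0
      & forall i j, M i j = \sum_y lam y * v y i * v y j].
Proof.
elim: n M => [|n IH] M cardM Mpsd.
  apply: psd_zero_diag_sum_rank1 => // i.
  by move: cardM; rewrite leqn0 => /eqP/card0_eq/(_ i); rewrite !inE => /negbFE/eqP.
have [k /= Mkk|diag0] := pickP [pred i | M i i != 0]; last first.
  by apply: psd_zero_diag_sum_rank1 => // i; apply/eqP/negbFE/diag0.
have supp_Mk : (#|diag_supp (schur_step M k)| <= n)%N.
  by rewrite -ltnS (leq_trans (schur_step_support Mpsd Mkk)).
have [lam [v [lam_ge0 lam_supp Mkdec]]] :=
  IH _ supp_Mk (schur_step_psd Mpsd Mkk).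
exists (fun y => if y == k then (M k k)^-1 else lam y).
exists (fun y => if y == k then M k else v y).
split=> [y|y Myy0|i j].
- by case: eqP => _ //; rewrite invr_ge0 psd_diag_ge0.
- have [yk|_] := eqVneq y k; first by rewrite -yk Myy0 eqxx in Mkk.
  by apply/lam_supp/(schur_step_diag Mpsd Mkk); left.
rewrite (bigD1 k) //= eqxx (eq_bigr (fun y => lam y * v y i * v y j)); last first.
  by move=> y /negPf ->.
have lamk0 : lam k = 0 by apply/lam_supp/(schur_step_diag Mpsd Mkk); right.
have := Mkdec i j; rewrite (bigD1 k) //= lamk0 !mul0r add0r => <-.
by rewrite /schur_step (proj1 Mpsd k i); field.
Qed.

Lemma psd_sum_rank1 M : psd M ->
  exists (lam : I -> R) (v : I -> I -> R),
    (forall y, 0 <= lam y) /\ forall i j, M i j = \sum_y lam y * v y i * v y j.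
Proof.
move=> /(psd_sum_rank1_supp (max_card (diag_supp M))) [lam [v [lam_ge0 _ Mdec]]].
by exists lam, v.
Qed.

End PsdDecomposition.

Section SchurComplement.
Variables (R : realType) (IA IB : finType) (Gm : xor_game R IA IB).
Variables (r : IA -> R) (c : IB -> R).
Local Notation G := (cost Gm).

Definition schur_compl (w w' : IB) : R :=
  (w == w')%:R * c w - \sum_x G x w * G x w' / r x.

Lemma sum_diag_quad (I : finType) (d u : I -> R) :
  \sum_i \sum_j u i * (if i == j then d i else 0) * u j = \sum_i d i * u i ^+ 2.
Proof.
apply: eq_bigr => i _; rewrite (bigD1 i) //= eqxx big1 ?addr0; first by ring.
by move=> j /negPf; rewrite eq_sym => ->; rewrite mulr0 mul0r.
Qed.

Lemma qform_block_rc (u : IA -> R) (z : IB -> R) :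
  qform (block_mx_rc Gm r c) (fun i => match i with inl x => u x | inr y => z y end)
  = \sum_x r x * u x ^+ 2 - 2 * \sum_x \sum_y u x * G x y * z y
    + \sum_y c y * z y ^+ 2.
Proof.
rewrite /qform big_sumType /= !(eq_bigr _ (fun i _ => big_sumType _ _ _)) /=.
rewrite !big_split /= !sum_diag_quad.
have -> : \sum_y \sum_x z y * - G x y * u x = - \sum_x \sum_y u x * G x y * z y.
  rewrite exchange_big -sumrN; apply: eq_bigr => x _.
  by rewrite -sumrN; apply: eq_bigr => y _; ring.
have -> : \sum_x \sum_y u x * - G x y * z y = - \sum_x \sum_y u x * G x y * z y.
  by rewrite -sumrN; apply: eq_bigr => x _; rewrite -sumrN; apply: eq_bigr => y _; ring.
ring.
Qed.

Lemma qform_schur_compl (z : IB -> R) :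
  qform schur_compl z = \sum_y c y * z y ^+ 2 - \sum_x (\sum_y G x y * z y) ^+ 2 / r x.
Proof.
transitivity (\sum_w \sum_w' z w * (if w == w' then c w else 0) * z w'
    - \sum_w \sum_w' \sum_x (G x w * z w) * (G x w' * z w') / r x).
  rewrite /qform -sumrB; apply: eq_bigr => w _; rewrite -sumrB; apply: eq_bigr => w' _.
  rewrite /schur_compl mulrBr mulrBl mulr_sumr mulr_suml.
  congr (_ - _); last by apply: eq_bigr => x _; ring.
  by case: eqP; rewrite ?mul1r ?mul0r.
rewrite sum_diag_quad; congr (_ - _).
under eq_bigr => w _ do rewrite exchange_big.
rewrite exchange_big; apply: eq_bigr => x _.
by rewrite expr2 big_distrlr mulr_suml; apply: eq_bigr => w _; rewrite mulr_suml.
Qed.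

Lemma schur_compl_psd :
  (forall x, 0 < r x) -> psd (block_mx_rc Gm r c) -> psd schur_compl.
Proof.
move=> r_gt0 [_ block_pos]; split=> [w w'|z].
  rewrite /schur_compl eq_sym; have [->|_] := eqVneq w' w; first by [].
  by rewrite !mul0r; congr (_ - _); apply: eq_bigr => x _; ring.
rewrite -/(qform _ _) qform_schur_compl.
pose g x := \sum_y G x y * z y.
have := block_pos (fun i => match i with inl x => g x / r x | inr y => z y end).
rewrite -/(qform _ _) qform_block_rc.
have -> : \sum_x \sum_y g x / r x * G x y * z y = \sum_x g x ^+ 2 / r x.
  apply: eq_bigr => x _.
  rewrite (_ : g x ^+ 2 / r x = g x / r x * \sum_y G x y * z y); last by rewrite /g; ring.
  by rewrite mulr_sumr; apply: eq_bigr => y _; ring.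
have -> : \sum_x r x * (g x / r x) ^+ 2 = \sum_x g x ^+ 2 / r x.
  by apply: eq_bigr => x _; field; rewrite gt_eqF.
by rewrite -/g; lra.
Qed.

End SchurComplement.

Lemma nf_xx (T : eqType) (x : T) : nf [:: x; x] = [::].
Proof. by rewrite /nf /= eqxx. Qed.

Section ScenarioCoef.
Variables (R : realType) (IA IB : finType).
Local Notation C := R[i].
Local Notation scen := (scen R IA IB).
Local Notation word := (word IA IB).
Implicit Types (p q s : scen) (g : word) (k : C).

Definition word_ind (w g : word) : C := ((nf w.1, nf w.2) == g)%:R.

Lemma scen_coefE p g : scen_coef p g = \sum_(t <- p) t.1 * word_ind t.2 g.
Proof.
rewrite /scen_coef big_mkcond; apply: eq_bigr => t _.
by rewrite /word_ind; case: eqP; rewrite ?mulr1 ?mulr0.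
Qed.

Lemma scen_coef_add p q g : scen_coef (scen_add p q) g = scen_coef p g + scen_coef q g.
Proof. by rewrite !scen_coefE big_cat. Qed.

Lemma scen_coef_scale k p g : scen_coef (scen_scale k p) g = k * scen_coef p g.
Proof. by rewrite !scen_coefE big_map mulr_sumr; apply: eq_bigr => t _; rewrite mulrA. Qed.

Lemma scen_coef_sub p q g : scen_coef (scen_sub p q) g = scen_coef p g - scen_coef q g.
Proof. by rewrite scen_coef_add scen_coef_scale mulN1r. Qed.

Lemma scen_coef_sum (J : Type) (r : seq J) (F : J -> scen) g :
  scen_coef (scen_sum r F) g = \sum_(j <- r) scen_coef (F j) g.
Proof.
elim: r => [|j r IHr]; first by rewrite /scen_sum !big_nil scen_coefE big_nil.
by rewrite /scen_sum !big_cons scen_coef_add -IHr.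
Qed.

Lemma scen_coef_mul p q g : scen_coef (scen_mul p q) g =
  \sum_(s <- p) \sum_(t <- q) s.1 * t.1 * word_ind (s.2.1 ++ t.2.1, s.2.2 ++ t.2.2) g.
Proof. by rewrite scen_coefE /scen_mul big_allpairs_dep. Qed.

Lemma scen_coef_mulDl p q s g :
  scen_coef (scen_mul (scen_add p q) s) g =
  scen_coef (scen_mul p s) g + scen_coef (scen_mul q s) g.
Proof. by rewrite !scen_coef_mul big_cat. Qed.

Lemma scen_coef_mulDr p q s g :
  scen_coef (scen_mul p (scen_add q s)) g =
  scen_coef (scen_mul p q) g + scen_coef (scen_mul p s) g.
Proof. by rewrite !scen_coef_mul -big_split; apply: eq_bigr => t _; rewrite big_cat. Qed.

Lemma scen_coef_mulZl k p q g :
  scen_coef (scen_mul (scen_scale k p) q) g = k * scen_coef (scen_mul p q) g.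
Proof.
rewrite !scen_coef_mul big_map mulr_sumr; apply: eq_bigr => s _.
by rewrite mulr_sumr; apply: eq_bigr => t _; rewrite !mulrA.
Qed.

Lemma scen_coef_mulZr k p q g :
  scen_coef (scen_mul p (scen_scale k q)) g = k * scen_coef (scen_mul p q) g.
Proof.
rewrite !scen_coef_mul mulr_sumr; apply: eq_bigr => s _.
by rewrite big_map mulr_sumr; apply: eq_bigr => t _; rewrite /=; ring.
Qed.

Lemma scen_coef_mul_suml (J : Type) (r : seq J) (F : J -> scen) q g :
  scen_coef (scen_mul (scen_sum r F) q) g = \sum_(j <- r) scen_coef (scen_mul (F j) q) g.
Proof.
elim: r => [|j r IHr]; first by rewrite /scen_sum !big_nil scen_coef_mul big_nil.
by rewrite /scen_sum !big_cons scen_coef_mulDl -IHr.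
Qed.

Lemma scen_coef_mul_sumr (J : Type) (r : seq J) (F : J -> scen) p g :
  scen_coef (scen_mul p (scen_sum r F)) g = \sum_(j <- r) scen_coef (scen_mul p (F j)) g.
Proof.
elim: r => [|j r IHr].
  by rewrite /scen_sum !big_nil scen_coef_mul big1 // => s _; rewrite big_nil.
by rewrite /scen_sum !big_cons scen_coef_mulDr -IHr.
Qed.

Lemma scen_coef_sq_sub p q g :
  scen_coef (scen_sq (scen_sub p q)) g =
  scen_coef (scen_mul p p) g - scen_coef (scen_mul p q) g
  - scen_coef (scen_mul q p) g + scen_coef (scen_mul q q) g.
Proof.
rewrite /scen_sq /scen_sub scen_coef_mulDl !scen_coef_mulDr.
by rewrite !scen_coef_mulZl !scen_coef_mulZr; ring.
Qed.

Lemma scen_coef_gen_aa x g :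
  scen_coef (scen_mul (gen_a R IB x) (gen_a R IB x)) g = scen_coef (scen1 R IA IB) g.
Proof. by rewrite !scen_coefE !big_seq1 /word_ind /= nf_xx !mul1r. Qed.

Lemma scen_coef_gen_bb y g :
  scen_coef (scen_mul (gen_b R IA y) (gen_b R IA y)) g = scen_coef (scen1 R IA IB) g.
Proof. by rewrite !scen_coefE !big_seq1 /word_ind /= nf_xx !mul1r. Qed.

Lemma scen_mul_gen_ba x y :
  scen_mul (gen_b R IA y) (gen_a R IB x) = scen_mul (gen_a R IB x) (gen_b R IA y).
Proof. by []. Qed.

Definition lin_b (u : IB -> C) : scen :=
  scen_sum (enum IB) (fun y => scen_scale (u y) (gen_b R IA y)).

Lemma scen_coef_mul_lin_br p u g :
  scen_coef (scen_mul p (lin_b u)) g = \sum_y u y * scen_coef (scen_mul p (gen_b R IA y)) g.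
Proof.
by rewrite scen_coef_mul_sumr big_enum; apply: eq_bigr => y _; rewrite scen_coef_mulZr.
Qed.

Lemma scen_coef_mul_lin_bl u p g :
  scen_coef (scen_mul (lin_b u) p) g = \sum_y u y * scen_coef (scen_mul (gen_b R IA y) p) g.
Proof.
by rewrite scen_coef_mul_suml big_enum; apply: eq_bigr => y _; rewrite scen_coef_mulZl.
Qed.

Lemma scen_coef_sq_lin_b u g :
  scen_coef (scen_sq (lin_b u)) g =
  \sum_w \sum_w' u w * u w' * scen_coef (scen_mul (gen_b R IA w) (gen_b R IA w')) g.
Proof.
rewrite /scen_sq scen_coef_mul_lin_bl; apply: eq_bigr => w _.
by rewrite scen_coef_mul_lin_br mulr_sumr; apply: eq_bigr => w' _; rewrite mulrA.
Qed.

Lemma scen_coef_sq_a_sub_lin_b x k u g :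
  scen_coef (scen_sq (scen_sub (gen_a R IB x) (scen_scale k (lin_b u)))) g =
  scen_coef (scen1 R IA IB) g
  - 2 * k * \sum_y u y * scen_coef (scen_mul (gen_a R IB x) (gen_b R IA y)) g
  + k ^+ 2 * \sum_w \sum_w' u w * u w' *
               scen_coef (scen_mul (gen_b R IA w) (gen_b R IA w')) g.
Proof.
rewrite scen_coef_sq_sub scen_coef_gen_aa scen_coef_mulZl !scen_coef_mulZr scen_coef_mulZl.
rewrite scen_coef_mul_lin_br scen_coef_mul_lin_bl -/(scen_sq _) scen_coef_sq_lin_b.
under [X in _ - _ - _ * X + _ = _]eq_bigr => y _ do rewrite scen_mul_gen_ba.
ring.
Qed.

End ScenarioCoef.

Section SosIdentity.
Variables (F : numFieldType) (IA IB : finType).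
Variables (beta E : F) (rho : IA -> F) (c : IB -> F) (G : IA -> IB -> F).
(* [E], [P x y] and [Q w w'] play the coefficients of [1], [a_x b_y] and
   [b_w b_w'] at a fixed group element; the relation [b_w^2 = 1] enters only
   through [Q_diag]. *)
Variables (lam : IB -> F) (v : IB -> IB -> F) (P : IA -> IB -> F) (Q : IB -> IB -> F).
Hypothesis beta_rows : beta = \sum_x rho x.
Hypothesis beta_cols : beta = \sum_y c y.
Hypothesis rho_neq0 : forall x, rho x != 0.
Hypothesis Q_diag : forall w, Q w w = E.
Hypothesis schur_decomp : forall w w',
  (w == w')%:R * c w - \sum_x G x w * G x w' / rho x = \sum_y lam y * v y w * v y w'.

Lemma sos_identity :
  beta * E - \sum_x \sum_y G x y * P x y =
  \sum_x rho x / 2 * (E - 2 * (rho x)^-1 * \sum_y G x y * P x y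
                      + (rho x)^-1 ^+ 2 * \sum_y \sum_y' G x y * G x y' * Q y y')
  + \sum_y lam y / 2 * \sum_w \sum_w' v y w * v y w' * Q w w'.
Proof.
have quad_a : \sum_x rho x / 2 * ((rho x)^-1 ^+ 2 * \sum_y \sum_y' G x y * G x y' * Q y y')
    = \sum_w \sum_w' Q w w' * (\sum_x G x w * G x w' / rho x) / 2.
  transitivity (\sum_x \sum_w \sum_w' Q w w' * (G x w * G x w' / rho x) / 2).
    apply: eq_bigr => x _; rewrite !mulr_sumr; apply: eq_bigr => w _.
    by rewrite !mulr_sumr; apply: eq_bigr => w' _; field.
  rewrite exchange_big; apply: eq_bigr => w _; rewrite exchange_big.
  by apply: eq_bigr => w' _; rewrite mulr_sumr mulr_suml.
have quad_b : \sum_y lam y / 2 * \sum_w \sum_w' v y w * v y w' * Q w w'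
    = \sum_w \sum_w' Q w w' * (\sum_y lam y * v y w * v y w') / 2.
  transitivity (\sum_y \sum_w \sum_w' Q w w' * (lam y * v y w * v y w') / 2).
    apply: eq_bigr => y _; rewrite !mulr_sumr; apply: eq_bigr => w _.
    by rewrite !mulr_sumr; apply: eq_bigr => w' _; field.
  rewrite exchange_big; apply: eq_bigr => w _; rewrite exchange_big.
  by apply: eq_bigr => w' _; rewrite mulr_sumr mulr_suml.
have diag_c : \sum_w \sum_w' Q w w' * ((w == w')%:R * c w) / 2 = beta * E / 2.
  rewrite beta_cols !mulr_suml; apply: eq_bigr => w _.
  rewrite (bigD1 w) //= eqxx mul1r Q_diag big1 ?addr0 => [|w' /negPf]; first by ring.
  by rewrite eq_sym => ->; rewrite mul0r mulr0 mul0r.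
have lin_a : \sum_x rho x / 2 * (2 * (rho x)^-1 * \sum_y G x y * P x y)
    = \sum_x \sum_y G x y * P x y.
  by apply: eq_bigr => x _; field.
symmetry; under eq_bigr => x _ do rewrite mulrDr mulrBr.
rewrite big_split sumrB /= quad_a quad_b lin_a -addrA -big_split /=.
rewrite [X in _ + X = _](eq_bigr (fun w => \sum_w' Q w w' * ((w == w')%:R * c w) / 2)).
  by rewrite diag_c -!mulr_suml -beta_rows; field.
move=> w _; rewrite -big_split; apply: eq_bigr => w' _ /=.
by rewrite -mulrDl -mulrDr -schur_decomp addrC subrK.
Qed.

End SosIdentity.

Lemma Re_sum (R : realType) (J : Type) (r : seq J) (F : J -> R[i]) :
  complex.Re (\sum_(j <- r) F j) = \sum_(j <- r) complex.Re (F j).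
Proof. exact: (raddf_sum (@complex.Re R : Rcomplex R -> R)). Qed.

Section Biases.
Variables (R : realType) (IA IB : finType) (Gm : xor_game R IA IB) (S : qstrategy R IA IB).

Lemma qbias_row_sum : qbias Gm S = \sum_x row_bias Gm S x.
Proof. by rewrite /qbias Re_sum. Qed.

Lemma qbias_col_sum : qbias Gm S = \sum_y col_bias Gm S y.
Proof. by rewrite /qbias exchange_big Re_sum. Qed.

Lemma scen_coef_bias_poly g : scen_coef (bias_poly Gm) g =
  \sum_x \sum_y (cost Gm x y)%:C%C * scen_coef (scen_mul (gen_a R IB x) (gen_b R IA y)) g.
Proof.
rewrite scen_coef_sum big_enum; apply: eq_bigr => x _.
by rewrite scen_coef_sum big_enum; apply: eq_bigr => y _; rewrite scen_coef_scale.
Qed.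

End Biases.

Theorem mainTheorem6 (R : realType) (IA IB : finType)
    (Gm : xor_game R IA IB) (S : qstrategy R IA IB) :
  valid_game Gm ->
  optimal_strategy Gm S ->
  (* standing facts (Tsirelson, Slofstra) about the optimal row/column biases *)
  (forall x : IA, 0 < row_bias Gm S x) ->
  psd (block_mx_rc Gm (row_bias Gm S) (col_bias Gm S)) ->
  exists (lam : IB -> R) (v : IB -> IB -> R),
    (forall y, 0 <= lam y) /\
    scen_eq
      (scen_sub (scen_scale (qbias Gm S)%:C%C (scen1 R IA IB)) (bias_poly Gm))
      (scen_add
        (scen_sum (enum IA) (fun x =>
           scen_scale (row_bias Gm S x / 2)%:C%C
             (scen_sq (scen_sub (gen_a R IB x) (hat_b Gm (row_bias Gm S) x)))))
        (scen_sum (enum IB) (fun y =>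
           scen_scale (lam y / 2)%:C%C
             (scen_sq (scen_sum (enum IB) (fun w =>
                scen_scale (v y w)%:C%C (gen_b R IA w))))))).
Proof.
move=> _ _ r_gt0 block_psd.
have [lam [v [lam_ge0 schur_dec]]] := psd_sum_rank1 (schur_compl_psd r_gt0 block_psd).
exists lam, v; split=> // g.
rewrite scen_coef_sub scen_coef_scale scen_coef_bias_poly scen_coef_add !scen_coef_sum.
under [X in _ = X + _]eq_bigr => x _ do
  rewrite scen_coef_scale scen_coef_sq_a_sub_lin_b rmorphM !fmorphV rmorph_nat.
under [X in _ = _ + X]eq_bigr => y _ do
  rewrite scen_coef_scale scen_coef_sq_lin_b rmorphM fmorphV rmorph_nat.
rewrite !big_enum /=.
apply: (sos_identity (rho := fun x => (row_bias Gm S x)%:C%C)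
  (c := fun y => (col_bias Gm S y)%:C%C) (lam := fun y => (lam y)%:C%C)).
- by rewrite qbias_row_sum rmorph_sum.
- by rewrite qbias_col_sum rmorph_sum.
- by move=> x; rewrite fmorph_eq0 gt_eqF.
- by move=> w; rewrite scen_coef_gen_bb.
move=> w w'; have := congr1 (fun t : R => t%:C%C) (schur_dec w w').
rewrite /schur_compl rmorphB rmorphM rmorph_nat !rmorph_sum /=.
rewrite (eq_bigr (fun x => (cost Gm x w)%:C * (cost Gm x w')%:C / (row_bias Gm S x)%:C)%C).
  by move=> ->; apply: eq_bigr => y _; rewrite !rmorphM.
by move=> x _; rewrite !rmorphM fmorphV.
Qed.
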